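(* Let $\rho>0$ and let $k$ be a nonzero integer. For $X=\alpha\rho>0$ define \[ Z_k(X)=\frac{X^2\left(1-(-1)^k e^{-\pi X}\right)}{\left(k^2+X^2\right)\left(1-e^{-\pi X}\right)}. \] Then $Z_k$ is monotonically increasing in $X=\alpha\rho$, and \[ \lim_{\alpha\rho\to 0} Z_k=0,\qquad \lim_{\alpha\rho\to\infty} Z_k=1 . \]
   Context: Here $\alpha=(\sigma-1)\tau\ge 0$, where $\sigma>1$ is an elasticity of substitution and $\tau\ge0$ a transport-cost parameter, and $\rho>0$ is the radius of a circle; $Z_k$ depends on $\alpha$ and $\rho$ only through the product $\alpha\rho$. *)

From Stdlib Require Import Reals ZArith.
From Coquelicot Require Import Coquelicot.
Open Scope R_scope.

Definition Zk (k : Z) (X : R) : R :=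
  X ^ 2 * (1 - (-1) ^ (Z.abs_nat k) * exp (- PI * X))
  / ((IZR k ^ 2 + X ^ 2) * (1 - exp (- PI * X))).

(** Write [q = exp (- PI X)], [s = (-1)^k] and [m = k^2 >= 1], so that
    [Z_k(X) = X^2 (1 - s q) / ((m + X^2) (1 - q))].  For [s = 1] this is
    [X^2 / (m + X^2)]; for [s = -1] the sign of the derivative reduces to
    [PI X (m + X^2) < 2 m sinh (PI X)], which follows from
    [sinh t >= t + t^3/6] because [m PI^2 / 3 > 1].
    Near [0], [1 - q >= PI X / (1 + PI X)] gives [Z_k(X) = O(X)]; at infinity,
    [q X^2 -> 0] gives [Z_k(X) - 1 = O(1/X)]. *)

From Stdlib Require Import ZArith Lia.
From Stdlib Require Import Reals Lra Psatz.
From Coquelicot Require Import Coquelicot.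
Open Scope R_scope.

Lemma exp_ge_taylor4 t : 0 <= t -> 1 + t + t^2/2 + t^3/6 + t^4/24 <= exp t.
Proof.
  intros Ht.
  assert (H := sum_incr (fun i => / INR (Factorial.fact i) * t ^ i) 4 (exp t)
     (proj2_sig (exist_exp t))).
  simpl in H.
  refine (Rle_trans _ _ _ (Req_le _ _ _) (H _)).
  - field.
  - intros n. apply Rmult_le_pos.
    + apply Rlt_le, Rinv_0_lt_compat, lt_0_INR, Factorial.lt_O_fact.
    + now apply pow_le.
Qed.

Lemma exp_ge_taylor2 t : 0 <= t -> 1 + t + t^2/2 <= exp t.
Proof.
  intros Ht. assert (H := exp_ge_taylor4 t Ht).
  assert (0 <= t^3) by (apply pow_le; lra).
  assert (0 <= t^4) by (apply pow_le; lra).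
  lra.
Qed.

Lemma exp_sub_exp_opp_ge t : 0 <= t -> 2*t + t^3/3 <= exp t - exp (-t).
Proof.
  intros Ht. rewrite exp_Ropp.
  assert (HE := exp_ge_taylor4 t Ht).
  set (P := 1 + t + t^2/2 + t^3/6 + t^4/24) in *.
  set (P' := 1 - t + t^2/2 - t^3/6 + t^4/24).
  (* [P(t) P(-t) = 1 + t^6/72 + t^8/576], so [/ exp t <= / P(t) <= P(-t)]. *)
  assert (HPP : 1 <= P * P') by (unfold P, P'; nra).
  assert (HP : 1 <= P) by (unfold P; nra).
  assert (/ exp t <= / P) by (apply Rinv_le_contravar; lra).
  assert (/ P <= P').
  { apply (Rmult_le_reg_l P); [lra|]. rewrite Rinv_r by lra. lra. }
  assert (2*t + t^3/3 = P - P') by (unfold P, P'; field).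
  lra.
Qed.

Lemma exp_opp_lt_1 t : 0 < t -> exp (- t) < 1.
Proof. intros. rewrite <- exp_0. apply exp_increasing. lra. Qed.

Lemma one_sub_exp_opp_ge t : 0 <= t -> t <= (1 + t) * (1 - exp (- t)).
Proof.
  intros Ht. rewrite exp_Ropp.
  assert (HE := exp_ineq1_le t).
  assert (Hpos := exp_pos t).
  replace ((1 + t) * (1 - / exp t)) with (1 + t - (1 + t) / exp t) by (field; lra).
  assert ((1 + t) / exp t <= 1) by (apply Rle_div_l; lra).
  lra.
Qed.

Lemma exp_opp_PI_lt_1 X : 0 < X -> exp (- PI * X) < 1.
Proof.
  intros HX. rewrite Ropp_mult_distr_l_reverse.
  apply exp_opp_lt_1, Rmult_lt_0_compat; [exact PI_RGT_0 | lra].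
Qed.

Lemma exp_mul_exp_opp t : exp t * exp (- t) = 1.
Proof. rewrite <- exp_plus, Rplus_opp_r. apply exp_0. Qed.

Lemma PI_mul_lt_exp_sub_exp_opp m X : 1 <= m -> 0 < X ->
  PI * X * (m + X^2) < m * (exp (PI * X) - exp (- (PI * X))).
Proof.
  intros Hm HX. assert (Hpi := PI2_3_2).
  assert (Ht := exp_sub_exp_opp_ge (PI * X) ltac:(nra)).
  assert (0 < X^3) by (apply pow_lt; lra).
  assert (0 < PI * X * m) by (apply Rmult_lt_0_compat; nra).
  assert (0 < PI * X^3 * (m * PI^2 / 3 - 1)) by (apply Rmult_lt_0_compat; nra).
  assert (m * (2 * (PI * X) + (PI * X) ^ 3 / 3) =
    PI * X * (m + X^2) + (PI * X * m + PI * X^3 * (m * PI^2 / 3 - 1)))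
    by (unfold Rdiv; ring).
  nra.
Qed.

Lemma IZR_sqr_ge_1 (k : Z) : k <> 0%Z -> 1 <= IZR k ^ 2.
Proof.
  intros hk. destruct (Z_lt_le_dec 0 k) as [H|H].
  - assert (1 <= IZR k) by (apply IZR_le; lia). nra.
  - assert (IZR k <= -1) by (apply IZR_le; lia). nra.
Qed.

Lemma pow_m1_cases n : (-1) ^ n = 1 \/ (-1) ^ n = -1.
Proof.
  destruct (Nat.Even_or_Odd n) as [[p ->]|[p ->]].
  - left. apply pow_1_even.
  - right. rewrite Nat.add_1_r. apply pow_1_odd.
Qed.

Lemma filterlim_at_right_0_of_le_lin (f : R -> R) (C : R) : 0 < C ->
  (forall x, 0 < x < 1 -> Rabs (f x) <= C * x) ->
  filterlim f (at_right 0) (locally 0).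
Proof.
  intros HC Hf. apply filterlim_locally. intros [e He]; simpl.
  assert (Hd : 0 < Rmin 1 (e / (2 * C))).
  { apply Rmin_glb_lt; [lra|]. apply Rdiv_lt_0_compat; lra. }
  exists (mkposreal _ Hd). intros x Hx Hx0.
  change (Rabs (x - 0) < Rmin 1 (e / (2 * C))) in Hx.
  change (Rabs (f x - 0) < e).
  rewrite Rminus_0_r in Hx |- *. rewrite Rabs_pos_eq in Hx by lra.
  assert (Hx1 := Rmin_l 1 (e / (2 * C))). assert (Hx2 := Rmin_r 1 (e / (2 * C))).
  assert (HCx : C * x <= e / 2).
  { replace (e / 2) with (C * (e / (2 * C))) by (field; lra).
    apply Rmult_le_compat_l; lra. }
  specialize (Hf x ltac:(lra)). lra.
Qed.

Lemma filterlim_p_infty_of_le_inv (f : R -> R) (l C : R) :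
  (forall x, 1 <= x -> Rabs (f x - l) <= C / x) ->
  filterlim f (Rbar_locally p_infty) (locally l).
Proof.
  intros Hf. apply filterlim_locally. intros [e He]; simpl.
  exists (Rmax 1 (2 * C / e)). intros x Hx.
  assert (H1 := Rmax_l 1 (2 * C / e)). assert (H2 := Rmax_r 1 (2 * C / e)).
  apply (Rle_lt_trans _ (C / x)); [apply Hf; lra|].
  apply Rlt_div_l; [lra|].
  assert (2 * C / e * e = 2 * C) by (field; lra).
  destruct (Rle_lt_dec C 0); nra.
Qed.

Section Zgen.

Variables s m : R.
Hypothesis Hs : s = 1 \/ s = -1.
Hypothesis Hm : 1 <= m.

Definition Zgen (X : R) : R :=
  X ^ 2 * (1 - s * exp (- PI * X)) / ((m + X ^ 2) * (1 - exp (- PI * X))).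

Definition Zgen' (X : R) : R := let q := exp (- PI * X) in
  (2*X*m*(1-q)*(1-s*q) + PI*X^2*q*(m+X^2)*(s-1)) / ((m+X^2)*(1-q))^2.

Lemma is_derive_Zgen X : 0 < X -> is_derive Zgen X (Zgen' X).
Proof.
  intros HX. assert (Hq := exp_opp_PI_lt_1 X HX). unfold Zgen, Zgen'.
  auto_derive.
  - apply Rmult_integral_contrapositive; split; nra.
  - field; split; nra.
Qed.

Lemma Zgen'_pos X : 0 < X -> 0 < Zgen' X.
Proof.
  intros HX. assert (Hq1 := exp_opp_PI_lt_1 X HX).
  assert (Hq0 : 0 < exp (- PI * X)) by apply exp_pos.
  assert (HE := exp_mul_exp_opp (PI * X)).
  rewrite Ropp_mult_distr_l in HE.
  unfold Zgen'. set (q := exp (- PI * X)) in *. set (E := exp (PI * X)) in *.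
  apply Rdiv_lt_0_compat; [| apply pow_lt, Rmult_lt_0_compat; nra].
  destruct Hs as [-> | ->].
  - assert (0 < (1-q)*(1-q)) by nra.
    assert (0 < 2 * X * m) by nra. nra.
  - assert (Hsinh := PI_mul_lt_exp_sub_exp_opp m X Hm HX).
    rewrite Ropp_mult_distr_l in Hsinh; fold E q in Hsinh.
    replace (2*X*m*(1-q)*(1 - -1*q) + PI*X^2*q*(m+X^2)*(-1-1))
      with (2*X*m*(q * (E - q)) - 2*PI*X^2*q*(m+X^2))
      by (replace (q * (E - q)) with (1 - q * q) by lra; ring).
    assert (0 < 2 * X * q) by nra.
    assert (0 < 2 * X * q * (m * (E - q) - PI * X * (m + X^2)))
      by (apply Rmult_lt_0_compat; lra).
    lra.
Qed.

Lemma Zgen_increasing X Y : 0 < X -> X < Y -> Zgen X < Zgen Y.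
Proof.
  intros HX HXY.
  destruct (MVT_cor2 Zgen Zgen' X Y HXY) as [c [Hmvt Hc]].
  - intros c Hc. apply is_derive_Reals, is_derive_Zgen. lra.
  - assert (0 < Zgen' c) by (apply Zgen'_pos; lra).
    assert (0 < Zgen' c * (Y - X)) by (apply Rmult_lt_0_compat; lra). lra.
Qed.

Lemma Zgen_le_lin X : 0 < X < 1 -> Rabs (Zgen X) <= 3 * X.
Proof.
  intros HX. assert (Hq1 := exp_opp_PI_lt_1 X ltac:(lra)).
  assert (Hpi := PI2_3_2).
  assert (Hq := one_sub_exp_opp_ge (PI * X) ltac:(nra)).
  rewrite Ropp_mult_distr_l in Hq.
  unfold Zgen. set (q := exp (- PI * X)) in *.
  assert (Hq0 : 0 < q) by apply exp_pos.
  assert (HD : 0 < (m + X^2) * (1 - q)) by nra.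
  assert (HN : 0 <= X^2 * (1 - s*q) <= 2 * X^2) by (destruct Hs as [-> | ->]; nra).
  rewrite Rabs_pos_eq by (apply Rdiv_le_0_compat; lra).
  apply Rle_div_l; [lra|].
  assert (H1q : 2 * X < 3 * (1 - q)).
  { apply (Rmult_lt_reg_r (1 + PI * X)); [nra|].
    assert (0 < PI * (1 - X)) by (apply Rmult_lt_0_compat; lra).
    assert (0 < X * (3 * PI - 2 - 2 * PI * X)) by (apply Rmult_lt_0_compat; lra).
    lra. }
  assert (0 <= 3 * X * (1 - q) * (m - 1 + X^2)) by (apply Rmult_le_pos; nra).
  nra.
Qed.

Lemma Zgen_sub_1_le_inv X : 1 <= X -> Rabs (Zgen X - 1) <= 4 * m / X.
Proof.
  intros HX. assert (Hq1 := exp_opp_PI_lt_1 X ltac:(lra)).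
  assert (Hpi := PI2_3_2).
  assert (HE := exp_mul_exp_opp (PI * X)).
  rewrite Ropp_mult_distr_l in HE.
  assert (HEt := exp_ge_taylor2 (PI * X) ltac:(nra)).
  unfold Zgen. set (q := exp (- PI * X)) in *. set (E := exp (PI * X)) in *.
  assert (Hq0 : 0 < q) by apply exp_pos.
  assert (HX2 : 1 <= X^2) by nra.
  assert (HPX2 : 9 * X^2 <= (PI*X)^2).
  { assert (0 <= (PI^2 - 9) * X^2) by (apply Rmult_le_pos; nra).
    replace ((PI*X)^2) with (PI^2 * X^2) by ring. lra. }
  assert (3 <= PI * X) by nra.
  assert (HE4 : 4 <= E) by nra.
  assert (HE2 : 2 * X^2 <= E) by lra.
  assert (Hq4 : q <= 1/4) by nra.
  assert (HqX : q * X^2 <= 1/2) by nra.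
  assert (HD : 0 < (m + X ^ 2) * (1 - q)) by nra.
  replace (X ^ 2 * (1 - s * q) / ((m + X ^ 2) * (1 - q)) - 1)
    with ((q*X^2*(1-s) - m*(1-q)) / ((m + X ^ 2) * (1 - q)))
    by (field; split; nra).
  assert (HND : Rabs (q*X^2*(1-s) - m*(1-q)) <= 2*m).
  { destruct Hs as [-> | ->]; apply Rabs_le; nra. }
  rewrite Rabs_div by lra. rewrite (Rabs_pos_eq ((m + X ^ 2) * (1 - q))) by lra.
  unfold Rdiv. apply Rmult_le_compat; try lra.
  - apply Rabs_pos.
  - left; apply Rinv_0_lt_compat; lra.
  - apply Rinv_le_contravar; nra.
Qed.

End Zgen.

Theorem lemma1 (k : Z) (hk : k <> 0%Z) :
  (forall X Y : R, 0 < X -> X < Y -> Zk k X < Zk k Y) /\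
  filterlim (Zk k) (at_right 0) (locally 0) /\
  filterlim (Zk k) (Rbar_locally p_infty) (locally 1).
Proof.
  assert (Hs := pow_m1_cases (Z.abs_nat k)).
  assert (Hm := IZR_sqr_ge_1 k hk).
  change (Zk k) with (Zgen ((-1) ^ Z.abs_nat k) (IZR k ^ 2)).
  split; [|split].
  - exact (Zgen_increasing _ _ Hs Hm).
  - apply (filterlim_at_right_0_of_le_lin _ 3); [lra|].
    exact (Zgen_le_lin _ _ Hs Hm).
  - apply (filterlim_p_infty_of_le_inv _ _ (4 * IZR k ^ 2)).
    exact (Zgen_sub_1_le_inv _ _ Hs Hm).
Qed.
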